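(* Let $\tau$ be any substitution. Then (i) no two different basic generators for $\tau$ are G related, and (ii) every generator for $\tau$ is G related to a unique basic generator.
   Context: Let $\mathcal{A}$ be a finite nonempty alphabet, $\mathcal{A}^*$ the finite words over $\mathcal{A}$ (including the empty word), $\mathcal{A}^+$ the nonempty words, $|u|$ the length of $u$. A word $u$ is a factor of $v$ if $v=w_1uw_2$ for some words $w_1,w_2$. A substitution is a map $\tau:\mathcal{A}\to\mathcal{A}^+$ extended to a concatenation-respecting map on words. The language $\mathcal{L}(\tau)$ is the set of words that are factors of $\tau^n(a)$ for some letter $a$ and some $n\ge1$. A generator for $\tau$ is a triple $(v,u,w)$ with $v,u,w\in\mathcal{A}^+$, $u\in\mathcal{L}(\tau)$ and $\tau(u)=vuw$; $v$, $u$, $w$ are its left wing, center and right wing, and its length is $|u|$. If $(v,u,cw)$ is a generator with $c\in\mathcal{A}$, $w\in\mathcal{A}^*$, its right extension is the generator $(v,uc,w\tau(c))$; if $(vc,u,w)$ is a generator with $c\in\mathcal{A}$, $v\in\mathcal{A}^*$, its left extension is the generator $(\tau(c)v,cu,w)$. Two generators $g_1,g_2$ are G related ($g_1\sim_G g_2$) if there is a generator $g_3$ obtainable from $g_1$ and also from $g_2$ by finite (possibly empty) sequences of left and right extensions. A generator is basic if it is not G related to any generator of smaller length. *)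

From mathcomp Require Import all_boot.
Set Implicit Arguments. Unset Strict Implicit. Unset Printing Implicit Defensive.

Section Subst.
Variable A : finType.

Definition is_substitution (tau : A -> seq A) : Prop := forall a, tau a <> [::].

Definition subst_word (tau : A -> seq A) (w : seq A) : seq A := flatten (map tau w).

Definition factor (u v : seq A) : Prop := exists w1 w2, v = w1 ++ u ++ w2.

Definition in_lang (tau : A -> seq A) (u : seq A) : Prop :=
  exists (a : A) (n : nat), 1 <= n /\ factor u (iter n (subst_word tau) [:: a]).

Definition gen_triple := (seq A * seq A * seq A)%type.

Definition gen_left (g : gen_triple) : seq A := g.1.1.
Definition gen_center (g : gen_triple) : seq A := g.1.2.
Definition gen_right (g : gen_triple) : seq A := g.2.

Definition generator (tau : A -> seq A) (g : gen_triple) : Prop :=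
  let: (v, u, w) := g in
  [/\ v <> [::], u <> [::], w <> [::], in_lang tau u &
      subst_word tau u = v ++ u ++ w].

Definition gen_len (g : gen_triple) : nat := size (gen_center g).

Definition ext_step (tau : A -> seq A) (g g' : gen_triple) : Prop :=
  generator tau g /\
  (
   (exists v u c w, g = (v, u, c :: w) /\ g' = (v, rcons u c, w ++ tau c)) \/
   (exists v u c w, g = (rcons v c, u, w) /\ g' = (tau c ++ v, c :: u, w))).

Inductive ext_star (tau : A -> seq A) : gen_triple -> gen_triple -> Prop :=
| ext_refl g : ext_star tau g g
| ext_trans g1 g2 g3 : ext_step tau g1 g2 -> ext_star tau g2 g3 -> ext_star tau g1 g3.

Definition G_related (tau : A -> seq A) (g1 g2 : gen_triple) : Prop :=
  generator tau g1 /\ generator tau g2 /\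
  exists g3, generator tau g3 /\ ext_star tau g1 g3 /\ ext_star tau g2 g3.

Definition basic (tau : A -> seq A) (g : gen_triple) : Prop :=
  generator tau g /\
  forall g', generator tau g' -> G_related tau g g' -> ~ (gen_len g' < gen_len g).

End Subst.

(* Read the extension relation backwards. An extension adds one letter to the
   center, a generator has at most one right and one left predecessor, and if
   it has both they are the right and left extensions of a common generator,
   obtained by deleting the first and last letters of the center. This
   backward local confluence, together with the length decreasing strictly
   along backward steps, yields (as in Newman's lemma) a unique minimal
   ancestor for every generator. Basic generators are exactly the minimal
   ones, and two generators are G related iff they have a common descendant,
   hence iff they have the same minimal ancestor. *)

From Stdlib Require Import Classical Relations.
From Stdlib Require List.
From mathcomp Require Import all_boot.

Set Implicit Arguments.
Unset Strict Implicit.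
Unset Printing Implicit Defensive.

Section MinimalAncestors.
Variables (T : Type) (R : relation T) (size : T -> nat).
Hypothesis R_size : forall x y, R x y -> size y = (size x).+1.
Hypothesis R_pred_confluent : forall x1 x2 y, R x1 y -> R x2 y ->
  x1 = x2 \/ exists z, R z x1 /\ R z x2.

Local Notation R_star := (clos_refl_trans T R).

Definition minimal (x : T) : Prop := forall y, ~ R y x.

Lemma R_star_size x y : R_star x y -> size x <= size y.
Proof.
elim=> [u v /R_size -> | // | u v w _ uv _ vw]; [exact: leqnSn | exact: leq_trans uv vw].
Qed.

Lemma R_star_lastP x y : R_star x y -> x = y \/ exists y', R_star x y' /\ R y' y.
Proof.
move=> xy; case: {xy}(clos_rt_rtn1 _ _ _ _ xy) => [|y' z Ry'z xy']; first by left.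
by right; exists y'; split=> //; exact: clos_rtn1_rt.
Qed.

Lemma minimal_ancestor_exists y : exists x, R_star x y /\ minimal x.
Proof.
have [N] := ubnP (size y); elim: N y => // N IH y /ltnSE le_y.
have [[y' Ry'y] | no_pred] := classic (exists y', R y' y).
  have [|x [xy' min_x]] := IH y'; first by rewrite -ltnS -(R_size Ry'y).
  by exists x; split=> //; exact: rt_trans xy' (rt_step _ _ _ _ Ry'y).
by exists y; split; [exact: rt_refl | move=> y' Ry'y; apply: no_pred; exists y'].
Qed.

Lemma minimal_ancestor_unique y x1 x2 :
  R_star x1 y -> minimal x1 -> R_star x2 y -> minimal x2 -> x1 = x2.
Proof.
have [N] := ubnP (size y); elim: N y x1 x2 => // N IH y x1 x2 /ltnSE le_y.
move=> /R_star_lastP [-> | [y1 [x1y1 R1]]] min1 /R_star_lastP [-> | [y2 [x2y2 R2]]] min2 //.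
- by case: (min1 y2).
- by case: (min2 y1).
have lt1 : size y1 < N by rewrite -ltnS -(R_size R1).
have lt2 : size y2 < N by rewrite -ltnS -(R_size R2).
have [E | [z [Rzy1 Rzy2]]] := R_pred_confluent R1 R2.
  by subst y2; exact: IH x1y1 min1 x2y2 min2.
have [x [xz min_x]] := minimal_ancestor_exists z.
have -> := IH _ _ _ lt1 x1y1 min1 (rt_trans _ _ _ _ _ xz (rt_step _ _ _ _ Rzy1)) min_x.
by have -> := IH _ _ _ lt2 x2y2 min2 (rt_trans _ _ _ _ _ xz (rt_step _ _ _ _ Rzy2)) min_x.
Qed.

Lemma minimal_joinable_size x y z :
  minimal x -> R_star x z -> R_star y z -> size x <= size y.
Proof.
move=> min_x xz yz; have [x' [x'y min_x']] := minimal_ancestor_exists y.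
have <- : x' = x by exact: minimal_ancestor_unique (rt_trans _ _ _ _ _ x'y yz) min_x' xz min_x.
exact: R_star_size.
Qed.

End MinimalAncestors.

Section Generators.
Variables (A : finType) (tau : A -> seq A).

Local Notation sw := (subst_word tau).
Local Notation step := (ext_step tau).
Local Notation step_star := (clos_refl_trans _ step).

Definition right_extension (g g' : gen_triple A) : Prop :=
  exists v u c w, g = (v, u, c :: w) /\ g' = (v, rcons u c, w ++ tau c).

Definition left_extension (g g' : gen_triple A) : Prop :=
  exists v u c w, g = (rcons v c, u, w) /\ g' = (tau c ++ v, c :: u, w).

Lemma subst_word_cat u1 u2 : sw (u1 ++ u2) = sw u1 ++ sw u2.
Proof. by rewrite /subst_word map_cat flatten_cat. Qed.

Lemma in_lang_factor u u' : in_lang tau u -> factor u' u -> in_lang tau u'.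
Proof.
move=> [a [n [n_gt0 [x [y E]]]]] [p [q Eu]]; exists a, n; split=> //.
by exists (x ++ p), (q ++ y); rewrite E Eu !catA.
Qed.

Lemma ext_step_len g g' : step g g' -> gen_len g' = (gen_len g).+1.
Proof.
by case=> _ [[v [u [c [w [-> ->]]]]] | [v [u [c [w [-> ->]]]]]];
  rewrite /gen_len /gen_center /= ?size_rcons.
Qed.

Lemma right_extension_inj g1 g2 h :
  right_extension g1 h -> right_extension g2 h -> g1 = g2.
Proof.
move=> [v1 [u1 [c1 [w1 [-> ->]]]]] [v2 [u2 [c2 [w2 [-> [-> /rcons_inj [-> ->]]]]]]].
by move/List.app_inv_tail ->.
Qed.

Lemma left_extension_inj g1 g2 h :
  left_extension g1 h -> left_extension g2 h -> g1 = g2.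
Proof.
move=> [v1 [u1 [c1 [w1 [-> ->]]]]] [v2 [u2 [c2 [w2 [-> [E Ec Eu Ew]]]]]].
by subst; rewrite (List.app_inv_head _ _ _ E).
Qed.

(* The common predecessor drops the first and last letters of the center of h.
   The center of g1 cannot be a single letter d: a left predecessor forces the
   left wing of g1 to begin with [tau d], contradicting [tau d = v ++ [d] ++ w]. *)
Lemma right_left_common_pred g1 g2 h :
  generator tau g1 -> right_extension g1 h -> left_extension g2 h ->
  exists g3, step g3 g1 /\ step g3 g2.
Proof.
move=> gen1 [v1 [u1 [c [w1 [E1 ->]]]]] [v2 [u2 [d [w2 [-> [Ev Eu <-]]]]]].
subst g1 v1; case: gen1 => _ + _ + +.
case: u1 Eu => [//|d' [|x m]] /= [<- Eu] _ lang_u1 sw_u1.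
  move: sw_u1; rewrite /subst_word /= cats0 => /(congr1 size).
  by rewrite !size_cat /= -addnA -{1}[size _]addn0 => /eqP; rewrite eqn_add2l addnS.
have sw_xm : sw (x :: m) = v2 ++ d' :: x :: m ++ c :: w1.
  by apply: (List.app_inv_head (tau d')); rewrite -catA in sw_u1; exact: sw_u1.
have gen3 : generator tau (rcons v2 d', x :: m, c :: w1).
  split=> //; first by move/(congr1 size); rewrite size_rcons.
    by apply: (in_lang_factor lang_u1); exists [:: d'], [::]; rewrite cats0.
  by rewrite sw_xm cat_rcons.
exists (rcons v2 d', x :: m, c :: w1); split; split=> //.
  by right; exists v2, (x :: m), d', (c :: w1).
by left; exists (rcons v2 d'), (x :: m), c, w1; rewrite -Eu.
Qed.

Lemma ext_step_pred_confluent g1 g2 h : step g1 h -> step g2 h ->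
  g1 = g2 \/ exists g3, step g3 g1 /\ step g3 g2.
Proof.
move=> [gen1 [R1 | L1]] [gen2 [R2 | L2]].
- by left; exact: right_extension_inj R1 R2.
- by right; exact: right_left_common_pred gen1 R1 L2.
- by right; have [g3 [? ?]] := right_left_common_pred gen2 R2 L1; exists g3.
- by left; exact: left_extension_inj L1 L2.
Qed.

Lemma ext_star_rt g h : ext_star tau g h <-> step_star g h.
Proof.
split.
  elim=> [x | x y z S _ IH]; first exact: rt_refl.
  exact: rt_trans (rt_step _ _ _ _ S) IH.
move=> gh; elim: {gh}(clos_rt_rt1n _ _ _ _ gh) => [x | x y z S _ IH].
  exact: ext_refl.
exact: ext_trans S IH.
Qed.

Lemma step_star_generator g h : step_star g h -> generator tau h -> generator tau g.
Proof. by move=> gh; case: {gh}(clos_rt_rt1n _ _ _ _ gh) => // g' {}h []. Qed.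

Lemma basic_minimal g : basic tau g -> minimal step g.
Proof.
move=> [gen_g not_shorter] g' S; have [gen_g' _] := S.
apply: (not_shorter g' gen_g'); last by rewrite (ext_step_len S).
split=> //; split=> //; exists g; split=> //.
by split; apply/ext_star_rt; [exact: rt_refl | exact: rt_step].
Qed.

Lemma minimal_basic g : generator tau g -> minimal step g -> basic tau g.
Proof.
move=> gen_g min_g; split=> // g' _ [_ [_ [h [_ [/ext_star_rt gh /ext_star_rt g'h]]]]].
apply/negP; rewrite -leqNgt.
exact: (minimal_joinable_size ext_step_len ext_step_pred_confluent min_g gh g'h).
Qed.

End Generators.

Theorem mainTheorem4 (A : finType) (tau : A -> seq A) :
  0 < #|A| ->
  is_substitution tau ->
  (forall g1 g2 : gen_triple A,
      basic tau g1 -> basic tau g2 -> g1 <> g2 -> ~ G_related tau g1 g2) /\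
  (forall g : gen_triple A, generator tau g ->
      exists g0 : gen_triple A,
        [/\ basic tau g0, G_related tau g g0 &
            forall g1 : gen_triple A, basic tau g1 -> G_related tau g g1 -> g1 = g0]).
Proof.
move=> _ _; have len_step := @ext_step_len A tau.
have confluent := @ext_step_pred_confluent A tau.
split.
  move=> g1 g2 /basic_minimal min1 /basic_minimal min2 neq.
  move=> [_ [_ [h [_ [/ext_star_rt g1h /ext_star_rt g2h]]]]].
  exact/neq/(minimal_ancestor_unique len_step confluent g1h min1 g2h min2).
move=> g gen_g; have [g0 [g0g min_g0]] := minimal_ancestor_exists len_step g.
have gen_g0 := step_star_generator g0g gen_g.
exists g0; split; first exact: minimal_basic.
  split=> //; split=> //; exists g; split=> //.
  by split; apply/ext_star_rt=> //; exact: rt_refl.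
move=> g1 /basic_minimal min1 [_ [_ [h [_ [/ext_star_rt gh /ext_star_rt g1h]]]]].
exact: (minimal_ancestor_unique len_step confluent g1h min1 (rt_trans _ _ _ _ _ g0g gh) min_g0).
Qed.
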